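(* Let $m\ge 1$ and let $s_1,\dots,s_{2m}$ be positive integers (an instance of \textsc{Exact Partition}). Put $S=\sum_{i=1}^{2m}s_i$, $s_{\max}=\max_i s_i$, $M=S+1$, $d_i=s_{\max}-s_i$ for $i=1,\dots,2m$, and $\epsilon=\frac{1}{2M}$. Let $$P_R=\Big\{x\in\mathbb{R}^{2m}:\ 0\le x_i\le 1\ (i=1,\dots,2m),\ \sum_{i=1}^{2m}(M+s_i)x_i\le \tfrac12 S+mM+\epsilon,\ \sum_{i=1}^{2m}(M+d_i)x_i\le \tfrac12\sum_{i=1}^{2m}d_i+mM+\epsilon\Big\}.$$ If there is no $i\in\{1,\dots,2m\}$ with $s_i=\frac{s_{\max}}{2}$, then $P_R$ is a simple polytope, i.e. at every vertex of $P_R$ exactly $2m$ of its $4m+2$ defining inequalities are active.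
   Context: The polytope $P_R$ is the linear programming relaxation of the Frieze–Teng integer programming formulation of \textsc{Exact Partition}. The inequalities $0\le x_i\le 1$ are called box constraints, and the two remaining inequalities (K1) $\sum(M+s_i)x_i\le \frac12 S+mM+\epsilon$ and (K2) $\sum(M+d_i)x_i\le \frac12\sum d_i+mM+\epsilon$ are the knapsack constraints. A vertex is degenerate if more than $2m$ of the defining inequalities are active at it; the polytope is simple (non-degenerate) if it has no degenerate vertex. *)

From HB Require Import structures.
From mathcomp Require Import all_boot all_order all_algebra.
From mathcomp Require Import reals.
Set Implicit Arguments. Unset Strict Implicit. Unset Printing Implicit Defensive.
Import Order.TTheory GRing.Theory Num.Theory.
Local Open Scope ring_scope.

Definition S_tot (m : nat) (s : 'I_(2 * m) -> nat) : nat := (\sum_i s i)%N.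
Definition smax (m : nat) (s : 'I_(2 * m) -> nat) : nat := (\max_i s i)%N.
Definition Mbig (m : nat) (s : 'I_(2 * m) -> nat) : nat := (S_tot s).+1.
Definition dd (m : nat) (s : 'I_(2 * m) -> nat) (i : 'I_(2 * m)) : nat :=
  (smax s - s i)%N.
Definition eps {R : realType} (m : nat) (s : 'I_(2 * m) -> nat) : R :=
  1 / (2 * (Mbig s)%:R).

(* Index set of the 4m+2 defining inequalities:
   inl (inl i) : x_i >= 0 ;  inl (inr i) : x_i <= 1 ;
   inr false   : (K1)     ;  inr true    : (K2). *)
Definition cidx (m : nat) : finType := (('I_(2 * m) + 'I_(2 * m)) + bool)%type.

Definition K1lhs {R : realType} m (s : 'I_(2 * m) -> nat) (x : 'rV[R]_(2 * m)) : R :=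
  \sum_i ((Mbig s)%:R + (s i)%:R) * x 0 i.
Definition K1rhs {R : realType} m (s : 'I_(2 * m) -> nat) : R :=
  (S_tot s)%:R / 2 + m%:R * (Mbig s)%:R + eps s.
Definition K2lhs {R : realType} m (s : 'I_(2 * m) -> nat) (x : 'rV[R]_(2 * m)) : R :=
  \sum_i ((Mbig s)%:R + (dd s i)%:R) * x 0 i.
Definition K2rhs {R : realType} m (s : 'I_(2 * m) -> nat) : R :=
  (\sum_i dd s i)%:R / 2 + m%:R * (Mbig s)%:R + eps s.

Definition holds {R : realType} m (s : 'I_(2 * m) -> nat) (x : 'rV[R]_(2 * m))
    (c : cidx m) : Prop :=
  match c with
  | inl (inl i) => 0 <= x 0 i
  | inl (inr i) => x 0 i <= 1
  | inr false => K1lhs s x <= @K1rhs R m s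
  | inr true => K2lhs s x <= @K2rhs R m s
  end.

Definition active {R : realType} m (s : 'I_(2 * m) -> nat) (x : 'rV[R]_(2 * m))
    (c : cidx m) : bool :=
  match c with
  | inl (inl i) => x 0 i == 0
  | inl (inr i) => x 0 i == 1
  | inr false => K1lhs s x == @K1rhs R m s
  | inr true => K2lhs s x == @K2rhs R m s
  end.

Definition PR {R : realType} m (s : 'I_(2 * m) -> nat) (x : 'rV[R]_(2 * m)) : Prop :=
  forall c : cidx m, holds s x c.

Definition is_vertex {R : realType} m (s : 'I_(2 * m) -> nat) (x : 'rV[R]_(2 * m)) : Prop :=
  PR s x /\
  forall (y z : 'rV[R]_(2 * m)) (t : R),
    PR s y -> PR s z -> 0 < t < 1 -> x = t *: y + (1 - t) *: z -> y = z.

Definition simple_PR (R : realType) m (s : 'I_(2 * m) -> nat) : Prop :=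
  forall x : 'rV[R]_(2 * m), is_vertex s x ->
    #|[pred c : cidx m | active s x c]| = (2 * m)%N.

From HB Require Import structures.
From mathcomp Require Import all_boot all_order all_algebra.
From mathcomp Require Import reals.
From mathcomp Require Import lra ring zify.
Set Implicit Arguments. Unset Strict Implicit. Unset Printing Implicit Defensive.
Import Order.TTheory GRing.Theory Num.Theory.
Local Open Scope ring_scope.

(* At a point x of P_R every coordinate in {0, 1} makes exactly one box
   constraint active and every fractional coordinate none, so x has
   2m - |F| + k active constraints, where F is the set of fractional
   coordinates and k the number of tight knapsack constraints.  At a vertex
   |F| <= k: otherwise a nonzero direction supported on F is orthogonal to
   the tight knapsack normals, and x can be moved both ways along it inside
   P_R.  Conversely k <= |F| because epsilon = 1/(2M) makes both right-hand
   sides non-integral: if x is integral neither knapsack constraint is tight,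
   and if F = {j} then both being tight forces s_j = d_j modulo M, that is
   2 s_j = s_max. *)

Section Polyhedron.
Variables (R : realFieldType) (n : nat) (I : finType).
Variables (a : I -> 'cV[R]_n) (b : I -> R).

Definition feasible (x : 'rV[R]_n) : Prop := forall c, (x *m a c) 0 0 <= b c.

Definition tight (x : 'rV[R]_n) (c : I) : bool := (x *m a c) 0 0 == b c.

Definition extreme (x : 'rV[R]_n) : Prop :=
  feasible x /\
  forall (y z : 'rV[R]_n) (t : R),
    feasible y -> feasible z -> 0 < t < 1 -> x = t *: y + (1 - t) *: z -> y = z.

Lemma feasible_perturb (x d : 'rV[R]_n) :
  feasible x -> (forall c, tight x c -> (d *m a c) 0 0 = 0) ->
  exists2 e : R, 0 < e & forall t, `|t| <= e -> feasible (x + t *: d).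
Proof.
move=> hx hd.
pose f c := (b c - (x *m a c) 0 0) / (`|(d *m a c) 0 0| + 1).
exists (\big[Order.min/1]_(c | ~~ tight x c) f c).
  apply/bigmin_gtP; split=> [|c hc]; first exact: ltr01.
  apply: divr_gt0; last by rewrite ltr_pwDr.
  by rewrite subr_gt0 lt_neqAle hx andbT.
move=> t ht c; rewrite mulmxDl -scalemxAl mxE [X in _ + X]mxE.
have [hc|hc] := boolP (tight x c); first by rewrite hd // mulr0 addr0 (eqP hc).
set D := (d *m a c) 0 0; set r := b c - (x *m a c) 0 0.
have hfc : f c * (`|D| + 1) = r by rewrite mulfVK // gt_eqF // ltr_pwDr.
have hf0 : 0 <= f c by apply: divr_ge0; [rewrite subr_ge0 | rewrite addr_ge0].
have htf : `|t| <= f c := le_trans ht (bigmin_le_cond (P := fun c => ~~ tight x c) _ _ hc).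
have htD : t * D <= f c * `|D|.
  by rewrite (le_trans (ler_norm _)) // normrM ler_wpM2r.
have hfD : f c * `|D| <= r by rewrite -hfc ler_wpM2l // lerDl.
move: (le_trans htD hfD); rewrite /r; lra.
Qed.

Lemma extreme_tangent_eq0 (x d : 'rV[R]_n) :
  extreme x -> (forall c, tight x c -> (d *m a c) 0 0 = 0) -> d = 0.
Proof.
case=> hx hext hd; have [e e_gt0 he] := feasible_perturb hx hd.
have h2 : 0 < (2^-1 : R) < 1 by apply/andP; split; lra.
have hxe : x = 2^-1 *: (x + e *: d) + (1 - 2^-1) *: (x + - e *: d).
  by apply/rowP => i; rewrite !mxE; field.
have := hext _ _ _ (he e _) (he (- e) _) h2 hxe.
rewrite normrN gtr0_norm // lexx => /(_ isT isT) /eqP.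
rewrite -subr_eq0 opprD addrACA subrr add0r scaleNr opprK -scalerDl.
by rewrite scaler_eq0 gt_eqF ?addr_gt0 // => /eqP.
Qed.

Lemma exists_supported_kernel (F : {set 'I_n}) (q : nat) (B : 'M[R]_(n, q)) :
  (q < #|F|)%N ->
  exists2 d : 'rV[R]_n, d != 0 & d *m B = 0 /\ forall i, i \notin F -> d 0 i = 0.
Proof.
move=> hq.
pose G : 'M[R]_(#|F|, n) := \matrix_(k, i) (enum_val k == i)%:R.
pose v := nz_row (kermx (G *m B)).
have v_neq0 : v != 0.
  rewrite nz_row_eq0 -mxrank_eq0 mxrank_ker subn_eq0 -ltnNge.
  exact: leq_ltn_trans (rank_leq_col _) hq.
have vGE i : (v *m G) 0 i = \sum_k v 0 k * (enum_val k == i)%:R.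
  by rewrite mxE; apply: eq_bigr => k _; rewrite mxE.
exists (v *m G); last split.
- apply: contraNneq v_neq0 => vG0; apply/eqP/rowP => k; rewrite mxE.
  have := congr1 (fun A : 'rV[R]_n => A 0 (enum_val k)) vG0.
  rewrite /= vGE mxE (bigD1 k) //= eqxx mulr1 big1 ?addr0 // => k' hk'.
  by rewrite (inj_eq enum_val_inj) (negbTE hk') mulr0.
- by rewrite -mulmxA; apply/eqP; rewrite -sub_kermx nz_row_sub.
- move=> i hi; rewrite vGE big1 // => k _.
  by case: eqP => [ek|_]; [move: hi; rewrite -ek enum_valP | rewrite mulr0].
Qed.

Lemma extreme_card_le_tight (x : 'rV[R]_n) (F : {set 'I_n}) (K : {set I}) :
  extreme x ->
  (forall c, c \notin K -> tight x c -> forall i, i \in F -> a c i 0 = 0) ->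
  (#|F| <= #|[set c in K | tight x c]|)%N.
Proof.
move=> hx hK; rewrite leqNgt; apply/negP => hq.
set T := [set c in K | tight x c] in hq.
pose B : 'M[R]_(n, #|T|) := \matrix_(i, k) a (enum_val k) i 0.
have [d d_neq0 [dB dF]] := exists_supported_kernel B hq.
move/negP: d_neq0; apply; apply/eqP/(extreme_tangent_eq0 hx) => c hc.
have [cK|cK] := boolP (c \in K).
  have cT : c \in T by rewrite inE cK hc.
  have -> : (d *m a c) 0 0 = (d *m B) 0 (enum_rank_in cT c).
    by rewrite !mxE; apply: eq_bigr => i _; rewrite ?mxE enum_rankK_in.
  by rewrite dB mxE.
rewrite mxE big1 // => i _; have [iF|iF] := boolP (i \in F).
  by rewrite hK ?mulr0.
by rewrite dF ?mul0r.
Qed.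

End Polyhedron.

Lemma mul_col_sum (R : comPzRingType) (n : nat) (x : 'rV[R]_n) (w : 'I_n -> R) :
  (x *m \col_i w i) 0 0 = \sum_i w i * x 0 i.
Proof. by rewrite mxE; apply: eq_bigr => i _; rewrite mxE mulrC. Qed.

Lemma sum_binary_natr (R : nzRingType) (I : finType) (P : pred I)
    (w : I -> nat) (y : I -> R) :
  (forall i, P i -> y i \in [:: 0; 1]) ->
  exists N : nat, \sum_(i | P i) (w i)%:R * y i = N%:R.
Proof.
move=> hy; exists (\sum_(i | P i) w i * (y i == 1%R))%N; rewrite natr_sum.
apply: eq_bigr => i /hy; rewrite !inE => /orP [] /eqP ->.
  by rewrite mulr0 eq_sym oner_eq0 muln0.
by rewrite mulr1 eqxx muln1.
Qed.

Lemma sum_binary_but_one (R : nzRingType) (I : finType) (w : I -> nat)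
    (y : I -> R) (j : I) :
  (forall i, i != j -> y i \in [:: 0; 1]) ->
  exists N : nat, \sum_i (w i)%:R * y i = N%:R + (w j)%:R * y j.
Proof.
move=> hy; have [N hN] := sum_binary_natr w hy.
by exists N; rewrite (bigD1 j) //= addrC hN.
Qed.

Lemma eq_mulnD_small (M a b c1 c2 : nat) :
  (M * a + c1 = M * b + c2)%N -> (c1 < M)%N -> (c2 < M)%N -> c1 = c2.
Proof.
move=> /(congr1 (modn^~ M)) /= + h1 h2.
by rewrite ![(M * _)%N]mulnC !modnMDl !modn_small.
Qed.

Definition knapsack_rhs {R : numFieldType} (C k M : nat) : R :=
  C%:R / 2 + k%:R * M%:R + 1 / (2 * M%:R).

Lemma natr_neq_knapsack_rhs (R : numFieldType) (N C k M : nat) :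
  (2 <= M)%N -> (N%:R : R) != knapsack_rhs C k M.
Proof.
move=> hM; apply/eqP => hN.
have hM0 : (M%:R : R) != 0 by rewrite pnatr_eq0 -lt0n ltnW.
have : ((M * (2 * N) + 0)%N%:R : R) = (M * (C + 2 * k * M) + 1)%N%:R.
  by rewrite !natrD !natrM hN /knapsack_rhs; field.
by move/eqP; rewrite eqr_nat => /eqP /eq_mulnD_small; lia.
Qed.

(* Eliminating y leaves the integer identity M * P1 + c1 = M * P2 + c2. *)
Lemma knapsack_eqs_inconsistent (R : numFieldType) (A1 A2 C1 C2 c1 c2 k M : nat) (y : R) :
  (c1 < M)%N -> (c2 < M)%N -> c1 != c2 ->
  A1%:R + (M + c1)%:R * y = knapsack_rhs C1 k M ->
  A2%:R + (M + c2)%:R * y = knapsack_rhs C2 k M -> False.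
Proof.
move=> h1 h2 /eqP hne e1 e2.
have hM0 : (M%:R : R) != 0 by rewrite pnatr_eq0 -lt0n (leq_ltn_trans _ h1).
pose P1 := (2 * (M + c2) * A1 + (M + c1) * (C2 + 2 * k * M))%N.
pose P2 := (2 * (M + c1) * A2 + (M + c2) * (C1 + 2 * k * M))%N.
suff : ((M * P1 + c1)%N%:R : R) = (M * P2 + c2)%N%:R.
  by move/eqP; rewrite eqr_nat => /eqP /eq_mulnD_small; auto.
apply/eqP; rewrite -subr_eq0; apply/eqP.
transitivity (2 * M%:R * (M + c2)%:R * (A1%:R + (M + c1)%:R * y - knapsack_rhs C1 k M)
  - 2 * M%:R * (M + c1)%:R * (A2%:R + (M + c2)%:R * y - knapsack_rhs C2 k M)).
  by rewrite /P1 /P2 /knapsack_rhs !natrD !natrM; field.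
by rewrite e1 e2 !subrr !mulr0 subrr.
Qed.

Section ExactPartition.
Variables (R : realType) (m : nat) (s : 'I_(2 * m) -> nat).
Local Notation n := (2 * m)%N.
Local Notation M := (Mbig s).

Lemma s_le_smax i : (s i <= smax s)%N.
Proof. exact: leq_bigmax. Qed.

Lemma s_le_S_tot i : (s i <= S_tot s)%N.
Proof. by rewrite /S_tot (bigD1 i) //= leq_addr. Qed.

Lemma s_lt_Mbig i : (s i < M)%N.
Proof. exact: s_le_S_tot. Qed.

Lemma dd_lt_Mbig i : (dd s i < M)%N.
Proof.
rewrite ltnS /dd (leq_trans (leq_subr _ _)) //.
by apply/bigmax_leqP => j _; exact: s_le_S_tot.
Qed.

Lemma Mbig_ge2 : (0 < m)%N -> (forall i, 0 < s i)%N -> (2 <= M)%N.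
Proof.
move=> hm hs; have i0 : 'I_n by exists 0%N; rewrite muln_gt0.
by rewrite ltnS (leq_trans (hs i0)) ?s_le_S_tot.
Qed.

Definition normal (c : cidx m) : 'cV[R]_n :=
  match c with
  | inl (inl i) => - delta_mx i 0
  | inl (inr i) => delta_mx i 0
  | inr false => \col_i (M%:R + (s i)%:R)
  | inr true => \col_i (M%:R + (dd s i)%:R)
  end.

Definition bound (c : cidx m) : R :=
  match c with
  | inl (inl _) => 0
  | inl (inr _) => 1
  | inr false => K1rhs s
  | inr true => K2rhs s
  end.

Lemma holdsE x c : holds s x c = ((x *m normal c) 0 0 <= bound c).
Proof.
by case: c => [[i|i]|[]]; rewrite /= ?mul_col_sum ?mulmxN -?colE ?mxE ?oppr_le0.
Qed.

Lemma activeE x c : active s x c = tight normal bound x c.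
Proof.
by case: c => [[i|i]|[]]; rewrite /tight /= ?mul_col_sum ?mulmxN -?colE ?mxE ?oppr_eq0.
Qed.

Lemma is_vertex_extreme x : is_vertex s x -> extreme normal bound x.
Proof.
have PRE y : PR s y <-> feasible normal bound y.
  by split=> hy c; [rewrite -holdsE | rewrite holdsE].
case=> /PRE hx hv; split=> // y z t /PRE hy /PRE hz; exact: hv.
Qed.

Definition frac_coords (x : 'rV[R]_n) : {set 'I_n} := [set i | x 0 i \notin [:: 0; 1]].

Lemma card_active_frac x :
  (#|[pred c | active s x c]| + #|frac_coords x| =
   n + active s x (inr false) + active s x (inr true))%N.
Proof.
have card_sum (T : finType) (A : {pred T}) : #|A| = (\sum_t (t \in A))%N.
  by rewrite -sum1_card big_mkcond.
have card_pred (T : finType) (P : pred T) : #|[pred t | P t]| = (\sum_t P t)%N.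
  exact: card_sum.
have coord_split i :
    ((x 0%R i == 0%R) + (x 0%R i == 1%R) + (i \in frac_coords x) = 1)%N.
  rewrite !inE negb_or; have [->|] := eqP; first by rewrite eq_sym oner_eq0.
  by case: eqP.
have coord_sum :
    (\sum_i ((x 0%R i == 0%R) + (x 0%R i == 1%R) + (i \in frac_coords x)) = n)%N.
  by rewrite (eq_bigr _ (fun i _ => coord_split i)) sum1_card card_ord.
move: coord_sum; rewrite !big_split /=.
rewrite card_pred card_sum big_sumType big_sumType big_bool /=.
(* Naming the sums lets lia match occurrences that differ only in inferred instances. *)
set A0 := (\sum_(i < n) (x 0%R i == 0%R))%N.
set A1 := (\sum_(i < n) (x 0%R i == 1%R))%N.
set AF := (\sum_(i < n) (i \in frac_coords x))%N.
lia.
Qed.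

Lemma frac_le_tight_knapsacks x :
  is_vertex s x ->
  (#|frac_coords x| <= active s x (inr false) + active s x (inr true))%N.
Proof.
move=> hv.
have tightK : #|[set c in [set inr false; inr true] | tight normal bound x c]| =
    (active s x (inr false) + active s x (inr true))%N.
  rewrite -sum1_card big_mkcond big_sumType big1 ?big_bool => [|i _].
    by rewrite !inE !activeE /=; case: (tight _ _ _ _); case: (tight _ _ _ _).
  by rewrite !inE.
rewrite -tightK; apply: extreme_card_le_tight (is_vertex_extreme hv) _.
case=> [[i|i]|b] hK; last by case: b hK; rewrite !inE eqxx ?orbT.
all: rewrite -activeE /= => /eqP hi j; rewrite !mxE andbT.
all: by case: eqP => [->|_]; rewrite ?inE ?hi ?inE ?eqxx ?orbT ?oppr0.
Qed.

Lemma K1lhsE (x : 'rV[R]_n) : K1lhs s x = \sum_i (M + s i)%:R * x 0 i.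
Proof. by apply: eq_bigr => i _; rewrite natrD. Qed.

Lemma K2lhsE (x : 'rV[R]_n) : K2lhs s x = \sum_i (M + dd s i)%:R * x 0 i.
Proof. by apply: eq_bigr => i _; rewrite natrD. Qed.

Lemma tight_knapsacks_le_frac x :
  (2 <= M)%N -> (forall i, s i != dd s i) ->
  (active s x (inr false) + active s x (inr true) <= #|frac_coords x|)%N.
Proof.
move=> hM hsd; rewrite /= K1lhsE K2lhsE.
have binary i : i \notin frac_coords x -> x 0 i \in [:: 0; 1] by rewrite inE negbK.
case: (ltngtP #|frac_coords x| 1) => [F0|F2|F1].
- have hb i : x 0 i \in [:: 0; 1].
    by apply: binary; move: F0; rewrite ltnS leqn0 => /eqP/cards0_eq ->; rewrite inE.
  have not_tight w C : \sum_i (M + w i)%:R * x 0 i != knapsack_rhs C m M.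
    have [N ->] := sum_binary_natr (P := fun=> true) (fun i => M + w i)%N (fun i _ => hb i).
    exact: natr_neq_knapsack_rhs.
  by rewrite !(negbTE (not_tight _ _)).
- by case: (_ == _); case: (_ == _); rewrite //= ltnW.
- have [j Fj] : exists j, frac_coords x = [set j] by apply/cards1P/eqP.
  have hb i : i != j -> x 0 i \in [:: 0; 1].
    by move=> hij; apply: binary; rewrite Fj inE.
  have [N1 ->] := sum_binary_but_one (fun i => M + s i)%N hb.
  have [N2 ->] := sum_binary_but_one (fun i => M + dd s i)%N hb.
  suff : ~~ ((N1%:R + (M + s j)%:R * x 0 j == K1rhs s) &&
             (N2%:R + (M + dd s j)%:R * x 0 j == K2rhs s)).
    by rewrite F1; case: (_ == _); case: (_ == _).
  apply/andP => -[/eqP e1 /eqP e2].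
  exact: knapsack_eqs_inconsistent (s_lt_Mbig j) (dd_lt_Mbig j) (hsd j) e1 e2.
Qed.

End ExactPartition.

Theorem lemma1 (R : realType) (m : nat) (s : 'I_(2 * m) -> nat) :
  (1 <= m)%N ->
  (forall i, (0 < s i)%N) ->
  (forall i, (2 * s i)%N <> smax s) ->
  simple_PR R s.
Proof.
move=> hm hs hne x hv.
have hM := Mbig_ge2 hm hs.
have hsd i : s i != dd s i.
  by apply/eqP; have := hne i; have := s_le_smax s i; rewrite /dd; lia.
have := card_active_frac s x.
have := frac_le_tight_knapsacks hv.
have := tight_knapsacks_le_frac x hM hsd.
lia.
Qed.
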